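(* Let $G$ be a finite $p$-group of coclass $2$ and nilpotence class at least $3$. Then $G$ is nested and its chain of centers consists exactly of the terms of the upper central series of $G$ (i.e. $\{X_0,\dots,X_n\}=\{Z_1(G),Z_2(G),\dots,Z_c(G)=G\}$ where $c$ is the nilpotence class). If moreover $G$ has nilpotence class at least $4$, then $G$ is not nested by degrees.
   Context: A $p$-group $G$ of order $p^m$ ($m\ge2$) has coclass $k$ if its nilpotence class is $m-k$. $Z_1(G)=Z(G)$, $Z_{i+1}(G)/Z_i(G)=Z(G/Z_i(G))$. For $\chi\in\mathrm{Irr}(G)$, $Z(\chi)=\{g\in G: |\chi(g)|=\chi(1)\}$. $G$ is nested if for all $\chi,\psi\in\mathrm{Irr}(G)$ either $Z(\chi)\le Z(\psi)$ or $Z(\psi)\le Z(\chi)$; then the distinct subgroups $Z(\chi)$ form a chain $G=X_0>X_1>\dots>X_n\ge1$, the chain of centers. $G$ is nested by degrees if for all $\chi,\psi\in\mathrm{Irr}(G)$ with $\psi(1)\le\chi(1)$ we have $Z(\chi)\le Z(\psi)$. *)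

From HB Require Import structures.
From mathcomp Require Import all_boot all_order all_algebra all_fingroup all_solvable all_field all_character.
Set Implicit Arguments. Unset Strict Implicit. Unset Printing Implicit Defensive.
Import Order.TTheory GRing.Theory Num.Theory.
Local Open Scope ring_scope.

(* Z(chi) for an irreducible character is the library's 'Z(chi)%CF (cfcenter),
   which for characters is {g in G | `|chi g| = chi 1}. *)

Definition nested (gT : finGroupType) (G : {group gT}) : Prop :=
  forall i j : Iirr G,
    ('Z('chi_i)%CF \subset 'Z('chi_j)%CF) \/ ('Z('chi_j)%CF \subset 'Z('chi_i)%CF).

Definition nested_by_degrees (gT : finGroupType) (G : {group gT}) : Prop :=
  forall i j : Iirr G, ('chi_j 1%g <= 'chi_i 1%g)%R ->
    'Z('chi_i)%CF \subset 'Z('chi_j)%CF.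

Definition centers (gT : finGroupType) (G : {group gT}) : {set {set gT}} :=
  [set 'Z('chi[G]_i)%CF | i : Iirr G].

(* Let G be a p-group of order p^(c+2) and nilpotence class c >= 2, and write
   z_i = log_p |Z_i(G)|.  The z_i increase strictly up to z_c = c + 2, and since
   an index |G : Z_(i+1)(G)| = |G/Z_i : Z(G/Z_i)| is never prime we get
   z_(c-1) <= c, hence i <= z_i <= i + 1 for every i < c.

   For an irreducible character chi with kernel K we have Z(chi)/K = Z(G/K),
   i.e. Z(chi) is the preimage W of Z(G/K).  A normal subgroup of order p^k
   lies in Z_k(G); comparing orders with the bounds above then forces W to be
   some Z_m(G) with m > 0, so G is nested.  Conversely, in a nested group some
   irreducible character of G/Z_k(G) has center Z(G/Z_k(G)), whose preimage
   is Z_(k+1)(G); this shows that the centers are exactly Z_1(G), ..., Z_c(G).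
   Finally, if G were nested by degrees, the characters with centers
   Z_c, Z_(c-1), ... would have strictly increasing p-power degrees, so a
   character chi with center Z_(c-3)(G) would have chi(1) >= p^3; but
   chi(1)^2 <= |G : Z(chi)| <= p^5, a contradiction as soon as c >= 4. *)

From HB Require Import structures.
From mathcomp Require Import all_boot all_order all_algebra all_fingroup all_solvable all_field all_character.
Set Implicit Arguments. Unset Strict Implicit. Unset Printing Implicit Defensive.
Import GRing.Theory Num.Theory.
From mathcomp Require Import zify.

(* The preimage in H of the center of H/K; for K = Z_n(H) this is Z_(n+1)(H),
   and for K = ker chi it is Z(chi). *)
Local Notation precenter K H := (coset K @*^-1 'Z(H / K))%g.

Section PGroupOrders.
Local Open Scope group_scope.
Variables (gT : finGroupType) (p : nat).
Hypothesis pr_p : prime p.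
Implicit Types (A B H K : {group gT}).

Lemma logn_cardS A B : A \subset B -> logn p #|A| <= logn p #|B|.
Proof. by move=> sAB; apply: dvdn_leq_log; [exact: cardG_gt0 | exact: cardSg]. Qed.

Lemma pgroup_logn_eq A B :
  p.-group B -> A \subset B -> logn p #|B| <= logn p #|A| -> A :=: B.
Proof.
move=> pB sAB le_BA; apply/eqP; rewrite eqEcard sAB /=.
rewrite (card_pgroup pB) (card_pgroup (pgroupS sAB pB)).
by rewrite leq_exp2l ?prime_gt1.
Qed.

Lemma indexg_pgroup A B : p.-group B -> A \subset B ->
  #|B : A| = (p ^ (logn p #|B| - logn p #|A|))%N.
Proof.
move=> pB sAB; have p_gt0 : (0 < p ^ logn p #|A|)%N by rewrite expn_gt0 prime_gt0.
apply/eqP; rewrite -(eqn_pmul2l p_gt0) -expnD subnKC ?logn_cardS //.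
by rewrite -(card_pgroup (pgroupS sAB pB)) -(card_pgroup pB) Lagrange.
Qed.

(* While a normal subgroup K is not yet contained in Z_i(H), its intersection
   with the upper central series keeps growing: the image of K in H/Z_i(H) is
   a nontrivial normal subgroup, hence meets the center of H/Z_i(H). *)
Lemma normal_meet_ucn_proper H K i : nilpotent H -> K <| H ->
  ~~ (K \subset 'Z_i(H)) -> K :&: 'Z_i(H) \proper K :&: 'Z_i.+1(H).
Proof.
move=> nilH nsKH not_sKZ; rewrite properE setIS ?ucn_subS //=.
apply/negP => sZZ.
have nKZ : K \subset 'N('Z_i(H)) := subset_trans (normal_sub nsKH) (ucn_norm i H).
have ntKq : K / 'Z_i(H) != 1.
  by apply: contraNneq not_sKZ => Kq1; rewrite -quotient_sub1 // Kq1.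
have := meet_center_nil (quotient_nil _ nilH) (quotient_normal _ nsKH) ntKq.
rewrite -ucn_central -quotientIG ?ucn_subS // quotientS1 ?eqxx //.
exact: subset_trans sZZ (subsetIr _ _).
Qed.

(* A normal subgroup of order p^k of a p-group lies in its k-th center: by
   induction on n, either K <= Z_n(H) or |K :&: Z_n(H)| >= p^n. *)
Lemma normal_sub_ucn H K : p.-group H -> K <| H -> K \subset 'Z_(logn p #|K|)(H).
Proof.
move=> pH nsKH; have pK := pgroupS (normal_sub nsKH) pH.
suff [//|le_K_KZ] : K \subset 'Z_(logn p #|K|)(H) \/
                    logn p #|K| <= logn p #|K :&: 'Z_(logn p #|K|)(H)|.
  by apply/setIidPl; apply: pgroup_logn_eq pK (subsetIl _ _) le_K_KZ.
elim: (logn p #|K|) => [|i [sKZ | le_i_KZ]]; first by right.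
  by left; apply: subset_trans sKZ (ucn_subS i H).
have [sKZ | not_sKZ] := boolP (K \subset 'Z_i.+1(H)); first by left.
right; apply: leq_ltn_trans le_i_KZ _; apply: properG_ltn_log.
  exact: pgroupS (subsetIl _ _) pK.
apply: normal_meet_ucn_proper (pgroup_nil pH) nsKH _.
by apply: contra not_sKZ => sKZ; apply: subset_trans sKZ (ucn_subS i H).
Qed.

End PGroupOrders.

Section Precenter.
Local Open Scope group_scope.
Variable gT : finGroupType.
Implicit Types (H K L : {group gT}).

Lemma precenter_sub H K : K <| H -> precenter K H \subset H.
Proof. by move=> nsKH; rewrite sub_cosetpre_quo // center_sub. Qed.

Lemma precenterE H K : K <| H ->
  precenter K H = [set x in H | [~: [set x], H] \subset K].
Proof.
move=> nsKH; apply/setP=> x.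
rewrite -(setIidPr (precenter_sub nsKH)) [LHS]inE [RHS]inE.
case Hx: (x \in H) => //=; have nKH := normal_norm nsKH.
rewrite -sub1set -sub_quotient_pre -?quotient_cents2 ?sub1set ?(subsetP nKH) //.
by rewrite subsetI quotientS ?sub1set.
Qed.

Lemma precenterS H K L : K <| H -> L <| H -> K \subset L ->
  precenter K H \subset precenter L H.
Proof.
move=> nsKH nsLH sKL; rewrite (precenterE nsKH) (precenterE nsLH).
by apply/subsetP=> x; rewrite !inE => /andP[-> /subset_trans->].
Qed.

(* A group is never cyclic modulo its center unless abelian, so the index of
   the preimage of Z(H/K) in H cannot be prime. *)
Lemma index_precenter_not_prime H K : K <| H -> ~ prime #|H : precenter K H|.
Proof.
move=> nsKH; rewrite -{1}(quotientGK nsKH) index_cosetpre => pr_index.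
have : cyclic ((H / K) / 'Z(H / K)).
  by apply: prime_cyclic; rewrite card_quotient ?normal_norm ?center_normal.
move/cyclic_center_factor_abelian/center_idP => ZHK.
by move: pr_index; rewrite [X in #|_ : X|]ZHK indexgg.
Qed.

Lemma prime_section_sub_precenter H K L : nilpotent H -> K <| H -> L <| H ->
  K \subset L -> prime #|L : K| -> L \subset precenter K H.
Proof.
move=> nilH nsKH nsLH sKL pr_LK.
have nKL : L \subset 'N(K) := subset_trans (normal_sub nsLH) (normal_norm nsKH).
have pr_Lq : prime #|L / K| by rewrite card_quotient.
rewrite -sub_quotient_pre //; apply: (prime_meetG pr_Lq).
apply: meet_center_nil; [exact: quotient_nil | exact: quotient_normal |].
by apply: contraTneq pr_Lq => ->; rewrite cards1.
Qed.

End Precenter.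

Section UpperCentralSeries.
Local Open Scope group_scope.
Variables (gT : finGroupType) (G : {group gT}).
Hypothesis nilG : nilpotent G.

Local Notation c := (nil_class G).

Lemma ucn_classE m : c <= m -> 'Z_m(G) = G.
Proof. by move=> le_cm; apply/(ucn_nil_classP m nilG). Qed.

Lemma ucn_proper i : i < c -> 'Z_i(G) \proper 'Z_i.+1(G).
Proof.
move=> lt_ic; rewrite properE ucn_subS /=; apply/negP => sZZ.
suff : c <= i by rewrite leqNgt lt_ic.
have Zi_stable m : 'Z_(i + m)(G) = 'Z_i(G).
  elim: m => [|m IHm]; first by rewrite addn0.
  rewrite addnS ucnSn IHm -ucnSn; apply/eqP.
  by rewrite eqEsubset sZZ ucn_subS.
apply/(ucn_nil_classP i nilG).
by rewrite -(Zi_stable (c - i)) subnKC ?ucn_classE // ltnW.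
Qed.

End UpperCentralSeries.

Section UpperCentralOrders.
Local Open Scope group_scope.
Variables (gT : finGroupType) (G : {group gT}) (p : nat).
Hypothesis pG : p.-group G.

Local Notation c := (nil_class G).
Local Notation z i := (logn p #|'Z_i(G)|).

Lemma logn_ucn_lt i : i < c -> z i < z i.+1.
Proof.
move=> lt_ic; have pZ : p.-group 'Z_i.+1(G) := pgroupS (ucn_sub _ G) pG.
exact: properG_ltn_log pZ (ucn_proper (pgroup_nil pG) lt_ic).
Qed.

Lemma logn_ucn_addn i m : i + m <= c -> z i + m <= z (i + m).
Proof.
elim: m => [|m IHm] le_imc; first by rewrite !addn0.
rewrite addnS in le_imc *; have := logn_ucn_lt le_imc.
have := IHm (ltnW le_imc); lia.
Qed.

Lemma logn_ucn_ge i : i <= c -> i <= z i.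
Proof. by move=> le_ic; have := logn_ucn_addn (i := 0) le_ic; rewrite ucn0 cards1 logn1. Qed.

End UpperCentralOrders.

Section CoclassTwo.
Local Open Scope group_scope.
Variables (gT : finGroupType) (G : {group gT}) (p : nat).
Hypotheses (pr_p : prime p) (pG : p.-group G).
Hypothesis oG : logn p #|G| = (nil_class G + 2)%N.
Hypothesis c_ge2 : 2 <= nil_class G.

Implicit Types K W : {group gT}.

Local Notation c := (nil_class G).
Local Notation z i := (logn p #|'Z_i(G)|).

Let nilG : nilpotent G := pgroup_nil pG.
Let pZ i : p.-group 'Z_i(G) := pgroupS (ucn_sub i G) pG.

(* The top factor G/Z_(c-1)(G) has order at least p^2, since its order is the
   index of the preimage of Z(G/Z_(c-2)(G)), which is not prime. *)
Lemma logn_ucn_pred_class : z c.-1 <= c.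
Proof.
have lt_c1_c : c.-1 < c by lia.
have := logn_ucn_lt pG lt_c1_c; rewrite prednK; last lia.
rewrite (ucn_classE nilG (leqnn c)) oG => lt_z; rewrite leqNgt; apply/negP => gt_z.
have z_c1 : z c.-1 = (c + 1)%N by lia.
have index_p : #|G : 'Z_c.-1(G)| = p.
  rewrite (indexg_pgroup pr_p pG (ucn_sub _ _)) oG z_c1.
  by have -> : (c + 2 - (c + 1) = 1)%N by lia.
have c1E : c.-1 = c.-2.+1 by lia.
apply: (index_precenter_not_prime (ucn_normal c.-2 G)).
by rewrite -ucnSn -c1E index_p.
Qed.

(* As z grows strictly, z_i <= z_(c-1) - (c-1-i) <= i + 1 for all i < c. *)
Lemma logn_ucn_le i : i < c -> z i <= i.+1.
Proof.
move=> lt_ic; have := logn_ucn_addn pG (i := i) (m := c.-1 - i).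
rewrite subnKC; last lia.
move/(_ (leq_pred c)); have := logn_ucn_pred_class; lia.
Qed.

(* If |K| >= p^c then |G/K| <= p^2, so G/K is abelian. *)
Lemma precenter_large K : K <| G -> c <= logn p #|K| -> precenter K G = G.
Proof.
move=> nsKG le_c_K.
suff abGK : abelian (G / K) by rewrite (center_idP abGK) (quotientGK nsKG).
apply: (p2group_abelian (p := p)); first exact: quotient_pgroup.
rewrite card_quotient ?normal_norm // (indexg_pgroup pr_p pG (normal_sub nsKG)).
by rewrite pfactorK // oG leq_subLR leq_add2r.
Qed.

Lemma sandwiched_ucn k W : k < c -> z k = k.+1 ->
  'Z_k(G) \subset W -> W \subset 'Z_k.+1(G) -> ~ prime #|G : W| ->
  W :=: 'Z_k(G) \/ W :=: 'Z_k.+1(G).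
Proof.
move=> lt_kc zk sZW sWZ not_pr_index.
have pW := pgroupS (subset_trans sWZ (ucn_sub _ _)) pG.
have [le_W_k1 | lt_k1_W] := leqP (logn p #|W|) k.+1.
  by left; symmetry; apply: (pgroup_logn_eq pr_p pW sZW); rewrite -zk in le_W_k1.
right; apply: (pgroup_logn_eq pr_p (pZ k.+1) sWZ); change (z k.+1 <= logn p #|W|).
have [lt_k1_c | le_c_k1] := ltnP k.+1 c; first by have := logn_ucn_le lt_k1_c; lia.
have zk1 : z k.+1 = (c + 2)%N by rewrite (ucn_classE nilG le_c_k1).
have [//|lt_W] := leqP (z k.+1) (logn p #|W|).
case: not_pr_index; rewrite (indexg_pgroup pr_p pG (subset_trans sWZ (ucn_sub _ _))).
by rewrite oG (_ : (c + 2 - logn p #|W| = 1)%N) ?expn1 //; lia.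
Qed.

Lemma precenter_ucn K : K <| G -> exists2 m, 0 < m & precenter K G = 'Z_m(G).
Proof.
move=> nsKG; set k := logn p #|K|.
have sKZ : K \subset 'Z_k(G) := normal_sub_ucn pr_p pG nsKG.
have sWZ : precenter K G \subset 'Z_k.+1(G).
  by rewrite ucnSn; apply: precenterS nsKG (ucn_normal k G) sKZ.
have [le_c_k | lt_kc] := leqP c k.
  by exists c; [lia | rewrite precenter_large // (ucn_classE nilG (leqnn c))].
have [zk | ne_zk] := eqVneq (z k) k.
  have KE : K :=: 'Z_k(G) by apply: (pgroup_logn_eq pr_p (pZ k) sKZ); rewrite zk.
  by exists k.+1; rewrite // ucnSn -KE.
have zk : z k = k.+1.
  by have := logn_ucn_le lt_kc; have := logn_ucn_ge pG (ltnW lt_kc); lia.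
have sZW : 'Z_k(G) \subset precenter K G.
  apply: (prime_section_sub_precenter nilG nsKG (ucn_normal k G) sKZ).
  by rewrite (indexg_pgroup pr_p (pZ k) sKZ) zk subSnn expn1.
have [WE | WE] := sandwiched_ucn lt_kc zk sZW sWZ (index_precenter_not_prime nsKG).
  by exists k; rewrite // lt0n; apply: contraNneq ne_zk => k0; rewrite k0 ucn0 cards1 logn1.
by exists k.+1.
Qed.

End CoclassTwo.

Section NestedCenter.
Local Open Scope group_scope.
Local Open Scope ring_scope.
Variables (gT : finGroupType) (G : {group gT}).

(* In a nested group the smallest center Z(chi) is the intersection of all of
   them, i.e. the center of G. *)
Lemma nested_center_cfcenter : nested G -> exists i : Iirr G, 'Z('chi_i)%CF = 'Z(G).
Proof.
move=> nestG; pose i0 := [arg min_(i < (0 : Iirr G)) #|'Z('chi_i)%CF|].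
exists i0; apply/eqP; rewrite eqEsubset -cap_cfcenter_irr bigcap_inf // andbT.
apply/bigcapsP => j _; rewrite /i0; case: arg_minnP => // i _ min_i.
case: (nestG i j) => // sZji; suff -> : 'Z('chi_i)%CF = 'Z('chi_j)%CF by [].
by apply/eqP; rewrite eq_sym eqEcard sZji min_i.
Qed.

End NestedCenter.

Section CharacterCenters.
Local Open Scope group_scope.
Local Open Scope ring_scope.
Variables (gT : finGroupType) (G : {group gT}).

Lemma cfcenter_precenter (i : Iirr G) :
  'Z('chi_i)%CF = precenter (cfker 'chi_i) G.
Proof. by rewrite -cfcenter_eq_center quotientGK // cfker_center_normal. Qed.

Lemma cfcenter_mod (N : {group gT}) (j : Iirr (G / N)) : N <| G ->
  'Z('chi_(mod_Iirr j))%CF = coset N @*^-1 'Z('chi_j)%CF.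
Proof.
move=> nsNG; apply/setP => x.
have sZG : coset N @*^-1 'Z('chi_j)%CF \subset G.
  by rewrite sub_cosetpre_quo // cfcenter_sub.
have [Gx | notGx] := boolP (x \in G); last first.
  by apply/idP/idP => [/(subsetP (cfcenter_sub _))|/(subsetP sZG)]; rewrite (negPf notGx).
have Nx : x \in 'N(N) := subsetP (normal_norm nsNG) x Gx.
rewrite (irr_cfcenterE (mod_Iirr j) Gx) mod_IirrE //.
rewrite (cfModE _ nsNG Gx) (cfModE _ nsNG (group1 G)) (coset_id (group1 N)).
by rewrite morphpreE inE Nx [in RHS]inE (irr_cfcenterE j (mem_quotient N Gx)).
Qed.

Lemma nested_quotient (N : {group gT}) : N <| G -> nested G -> nested (G / N).
Proof.
move=> nsNG nestG i j.
by have := nestG (mod_Iirr i) (mod_Iirr j); rewrite !(cfcenter_mod _ nsNG) !cosetpreSK.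
Qed.

Lemma nested_precenter_cfcenter (N : {group gT}) : nested G -> N <| G ->
  exists i : Iirr G, 'Z('chi_i)%CF = precenter N G.
Proof.
move=> nestG nsNG; have [j Zj] := nested_center_cfcenter (nested_quotient nsNG nestG).
by exists (mod_Iirr j); rewrite (cfcenter_mod _ nsNG) Zj.
Qed.

Lemma nested_by_degrees_lt (i j : Iirr G) : nested_by_degrees G ->
  ~~ ('Z('chi_i)%CF \subset 'Z('chi_j)%CF) -> 'chi_i 1%g < 'chi_j 1%g.
Proof.
move=> nbdG not_sZij; rewrite real_ltNge ?Rreal_nat ?Cnat_irr1 //.
by apply: contra not_sZij; apply: nbdG.
Qed.

Section PGroupDegrees.
Variable p : nat.
Hypotheses (pr_p : prime p) (pG : p.-group G).

(* Irreducible degrees divide |G|, hence are powers of p. *)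
Lemma irr1_pexp (i : Iirr G) : exists a, 'chi_i 1%g = (p ^ a)%:R.
Proof.
have /natrP[n chi1] := Cnat_irr1 i.
have := dvd_irr1_cardG i; rewrite chi1 dvdC_nat (card_pgroup pG).
by case/(dvdn_pfactor _ _ pr_p) => a _ ->; exists a.
Qed.

Lemma irr1_logn_bound (i : Iirr G) a : 'chi_i 1%g = (p ^ a)%:R ->
  (a * 2 <= logn p #|G| - logn p #|'Z('chi_i)%CF|)%N.
Proof.
move=> chi1; have := (irr1_bound i).1.
rewrite chi1 -natrX ler_nat -expnM (indexg_pgroup pr_p pG (cfcenter_sub _)).
by rewrite leq_exp2l ?prime_gt1.
Qed.

End PGroupDegrees.
End CharacterCenters.

Section CoclassTwoCharacters.
Local Open Scope group_scope.
Local Open Scope ring_scope.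
Variables (gT : finGroupType) (G : {group gT}) (p : nat).
Hypotheses (pr_p : prime p) (pG : p.-group G).
Hypothesis oG : logn p #|G| = (nil_class G + 2)%N.
Hypothesis c_ge2 : (2 <= nil_class G)%N.

Local Notation c := (nil_class G).

Lemma cfcenter_ucn (i : Iirr G) : exists2 m, (0 < m)%N & 'Z('chi_i)%CF = 'Z_m(G).
Proof. by rewrite cfcenter_precenter; apply: precenter_ucn pr_p pG oG c_ge2 _ (cfker_normal _). Qed.

(* The centers lie on a chain, hence are totally ordered. *)
Lemma coclass2_nested : nested G.
Proof.
move=> i j; have [m _ ->] := cfcenter_ucn i; have [n _ ->] := cfcenter_ucn j.
by case: (leqP m n) => [le_mn | /ltnW le_nm]; [left | right]; apply: ucn_sub_geq.
Qed.

Lemma ucn_cfcenter k : exists i : Iirr G, 'Z('chi_i)%CF = 'Z_k.+1(G).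
Proof. by rewrite ucnSn; apply: nested_precenter_cfcenter coclass2_nested (ucn_normal k G). Qed.

(* The centers are exactly Z_1(G), ..., Z_c(G); terms beyond Z_c(G) equal G. *)
Lemma coclass2_centers : centers G = [set 'Z_k.+1(G) | k : 'I_c].
Proof.
apply/setP => A; apply/imsetP/imsetP => [[i _ ->] | [k _ ->]]; last first.
  by have [i Zi] := ucn_cfcenter k; exists i.
have [m m_gt0 ->] := cfcenter_ucn i; have lt_c1_c : (c.-1 < c)%N by lia.
have [le_mc | lt_cm] := leqP m c.
  have lt_m1_c : (m.-1 < c)%N by lia.
  by exists (Ordinal lt_m1_c); rewrite //= prednK.
exists (Ordinal lt_c1_c) => //=.
rewrite prednK; last lia.
by rewrite (ucn_classE (pgroup_nil pG) (leqnn c)) (ucn_classE (pgroup_nil pG) (ltnW lt_cm)).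
Qed.

Lemma nested_by_degrees_irr1_ge j : nested_by_degrees G -> (j < c)%N ->
  forall (i : Iirr G) a, 'Z('chi_i)%CF = 'Z_(c - j)(G) ->
  'chi_i 1%g = (p ^ a)%:R -> (j <= a)%N.
Proof.
move=> nbdG; elim: j => // j IHj lt_j1_c i a Zi chi1.
have [i' Zi'] := ucn_cfcenter (c - j.+1); have [a' chi1'] := irr1_pexp pr_p pG i'.
have cjE : (c - j.+1).+1 = (c - j)%N by lia.
have le_j_a' : (j <= a')%N.
  by apply: (IHj _ i' a' _ chi1'); [lia | rewrite Zi' cjE].
suff : (a' < a)%N by lia.
have lt_cj1_c : (c - j.+1 < c)%N by lia.
have := ucn_proper (pgroup_nil pG) lt_cj1_c; rewrite -Zi' -Zi properE => /andP[_ not_sZ].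
have := nested_by_degrees_lt nbdG not_sZ.
by rewrite chi1 chi1' ltr_nat ltn_exp2l ?prime_gt1.
Qed.

(* From class 4 on, a character with center Z_(c-3)(G) would need degree at
   least p^3, while its degree is at most p^(5/2). *)
Lemma coclass2_not_nested_by_degrees : (4 <= c)%N -> ~ nested_by_degrees G.
Proof.
move=> c_ge4 nbdG.
have [i Zi] := ucn_cfcenter (c - 4); have [a chi1] := irr1_pexp pr_p pG i.
have c3E : (c - 4).+1 = (c - 3)%N by lia.
have le3a : (3 <= a)%N.
  by apply: (@nested_by_degrees_irr1_ge 3 nbdG _ i a _ chi1); [lia | rewrite Zi c3E].
have := irr1_logn_bound pr_p pG chi1; rewrite Zi c3E oG.
have := logn_ucn_ge pG (leq_subr 3 c); lia.
Qed.

End CoclassTwoCharacters.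

Theorem mainTheorem19 (gT : finGroupType) (G : {group gT}) (p : nat) :
  prime p -> (p.-group G)%g ->
  logn p #|G| = (nil_class G + 2)%N ->
  (3 <= nil_class G)%N ->
  [/\ nested G,
      centers G = [set ('Z_k.+1(G))%g | k : 'I_(nil_class G)]
    & (4 <= nil_class G)%N -> ~ nested_by_degrees G].
Proof.
move=> pr_p pG oG /ltnW c_ge2; split.
- exact: coclass2_nested pr_p pG oG c_ge2.
- exact: coclass2_centers pr_p pG oG c_ge2.
- exact: coclass2_not_nested_by_degrees pr_p pG oG c_ge2.
Qed.
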